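(* Let $q$ be a prime power, $\pi={\rm PG}(2,q)$, $C_1$ a Singer cyclic group of ${\rm PGL}(3,q)$ and $\mathcal B$ the circumscribed bundle of $\pi$ left invariant by $C_1$. Let $\mathcal C,\mathcal C'$ be two distinct conics of $\mathcal B$ and let $g\in C_1$ with $\mathcal C'=\mathcal C^g$. If $\mathcal C\cap\mathcal C'=\{B\}$ and $A\in\mathcal C$ is the point with $A^g=B$, then $B\in PP^g$ for every point $P\in\mathcal C\setminus\{A,B\}$. In particular, the line $BB^g$ is tangent to $\mathcal C$ at $B$ and the line $BB^{g^{-1}}$ is tangent to $\mathcal C'$ at $B$.
   Context: A Singer cyclic group of ${\rm PGL}(3,q)$ is a cyclic group of order $q^2+q+1$ acting regularly on the points of ${\rm PG}(2,q)$. Embedding $\pi$ in ${\rm PG}(2,q^3)$, $C_1$ fixes a unique triangle $\Delta$ with vertices in ${\rm PG}(2,q^3)\setminus{\rm PG}(2,q)$. The circumscribed bundle $\mathcal B$ is the set of non-degenerate conics of $\pi$ whose extensions over ${\rm GF}(q^3)$ contain the three vertices of $\Delta$; it consists of $q^2+q+1$ conics, any two meeting in exactly one point, and it is invariant under $C_1$. For distinct points $X,Y$, $XY$ denotes the line joining them. *)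

From HB Require Import structures.
From mathcomp Require Import all_boot all_order all_algebra all_field.
Set Implicit Arguments. Unset Strict Implicit. Unset Printing Implicit Defensive.
Import Order.TTheory GRing.Theory.
Local Open Scope ring_scope.

(** Points of PG(2,K) are represented by nonzero row vectors of 'rV[K]_3;
    two such vectors represent the same point iff they are proportional. *)
Definition prop_pt (K : fieldType) (u v : 'rV[K]_3) : Prop :=
  exists2 k : K, k != 0 & u = k *: v.

Definition is_scalar_mx3 (K : fieldType) (M : 'M[K]_3) : Prop :=
  exists a : K, M = a%:M.

(** A projectivity of PG(2,K) is given by an invertible matrix M acting on
    row vectors: P |-> P *m M.  *)

(** [S] generates a Singer cyclic group of PGL(3,q), q = #|F|:
    the group <S> of PGL(3,q) is cyclic of order q^2+q+1 and acts regularly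
    on the points of PG(2,q). *)
Definition singer_order (F : finFieldType) : nat := (#|F| ^ 2 + #|F| + 1)%N.

Definition is_singer (F : finFieldType) (S : 'M[F]_3) : Prop :=
  [/\ S \in unitmx,
      (* order of the image of S in PGL(3,q) is exactly q^2+q+1 *)
      is_scalar_mx3 (S ^+ singer_order F),
      (forall k, (0 < k < singer_order F)%N -> ~ is_scalar_mx3 (S ^+ k)) &
      (forall u v : 'rV[F]_3, u != 0 -> v != 0 ->
         exists k, [/\ (k < singer_order F)%N, prop_pt (u *m S ^+ k) v &
           forall k', (k' < singer_order F)%N -> prop_pt (u *m S ^+ k') v -> k' = k])].

Definition qform (K : comNzRingType) (c : 'rV[K]_6) (x : 'rV[K]_3) : K :=
  let a := c ord0 (inord 0) in let b := c ord0 (inord 1) in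
  let cc := c ord0 (inord 2) in let f := c ord0 (inord 3) in
  let g := c ord0 (inord 4) in let h := c ord0 (inord 5) in
  let x0 := x ord0 (inord 0) in let x1 := x ord0 (inord 1) in
  let x2 := x ord0 (inord 2) in
  a * x0 ^+ 2 + b * x1 ^+ 2 + cc * x2 ^+ 2 + f * x1 * x2 + g * x0 * x2
  + h * x0 * x1.

(** Non-degeneracy (valid in every characteristic): the "half determinant"
    4abc + fgh - af^2 - bg^2 - ch^2 is nonzero. *)
Definition nondeg_conic (K : comNzRingType) (c : 'rV[K]_6) : Prop :=
  let a := c ord0 (inord 0) in let b := c ord0 (inord 1) in
  let cc := c ord0 (inord 2) in let f := c ord0 (inord 3) in
  let g := c ord0 (inord 4) in let h := c ord0 (inord 5) in
  4 * a * b * cc + f * g * h - a * f ^+ 2 - b * g ^+ 2 - cc * h ^+ 2 != 0.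

Definition on_conic (K : comNzRingType) (c : 'rV[K]_6) (x : 'rV[K]_3) : Prop :=
  x != 0 /\ qform c x = 0.

Definition same_conic (K : fieldType) (c c' : 'rV[K]_6) : Prop :=
  exists2 k : K, k != 0 & c' = k *: c.

Definition image_conic (K : fieldType) (c c' : 'rV[K]_6) (M : 'M[K]_3) : Prop :=
  exists2 k : K, k != 0 & forall x : 'rV[K]_3, qform c' (x *m M) = k * qform c x.

Definition ext_mx (F : fieldType) (L : fieldExtType F) m n (A : 'M[F]_(m, n)) :
  'M[L]_(m, n) := map_mx (in_alg L) A.

(** Vertices of the triangle Delta: the points of PG(2,L) fixed by C1 = <S>. *)
Definition delta_vertex (F : fieldType) (L : fieldExtType F) (S : 'M[F]_3)
  (v : 'rV[L]_3) : Prop :=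
  v != 0 /\ prop_pt (v *m ext_mx L S) v.
Arguments delta_vertex {F} L S v.

(** The circumscribed bundle: non-degenerate conics of PG(2,q) whose extension
    over L contains the vertices of Delta. *)
Definition in_bundle (F : fieldType) (L : fieldExtType F) (S : 'M[F]_3)
  (c : 'rV[F]_6) : Prop :=
  nondeg_conic c /\
  forall v : 'rV[L]_3, delta_vertex L S v -> qform (ext_mx L c) v = 0.
Arguments in_bundle {F} L S c.

Definition rows3 (K : ringType) (X Y Z : 'rV[K]_3) : 'M[K]_3 :=
  \matrix_(i < 3, j < 3)
    (if (i == 0 :> nat) then X ord0 j else if (i == 1 :> nat) then Y ord0 j
     else Z ord0 j).

Definition on_line (K : fieldType) (Z X Y : 'rV[K]_3) : Prop :=
  [/\ X != 0, Y != 0, ~ prop_pt X Y & \det (rows3 X Y Z) = 0].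

Definition tangent_at (K : fieldType) (c : 'rV[K]_6) (B X Y : 'rV[K]_3) : Prop :=
  [/\ on_conic c B, on_line B X Y &
      forall P, on_conic c P -> on_line P X Y -> prop_pt P B].

(* Over L = GF(q^3) the Singer matrix S is diagonal in the frame formed by the
   vertices of Delta.  A conic of the bundle passes through them, so in frame
   coordinates its equation is a x1 x2 + b x0 x2 + e x0 x1 with a b e <> 0, and
   g = S^k acts as x |-> (l0 x0, l1 x1, l2 x2).  Hence the polar form satisfies
     bil(X, X^g) = (l0 + l1 + l2) Q(X) - l0 l1 l2 Q(X^(g^-1)),
   so BB^g is tangent to C at B because B and A ~ B^(g^-1) lie on C; the same
   identity for g^-1 and C' = C^g gives the tangent to C' at B.  For P on C,
   eliminating between the equations of B, B^(g^-1) and P shows det(P, P^g, B) = 0.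
   Nondegeneracy of the configuration comes from g having no fixed point (as
   C <> C') and from B not being a vertex of Delta (S has no eigenvalue in GF(q)). *)

From HB Require Import structures.
From mathcomp Require Import all_boot all_order all_algebra all_field.
From mathcomp Require Import ring.
Set Implicit Arguments. Unset Strict Implicit. Unset Printing Implicit Defensive.
Import GRing.Theory.
Local Open Scope ring_scope.

Section Coordinates.
Variable K : comNzRingType.
Implicit Types (X Y Z : 'rV[K]_3) (c d : 'rV[K]_6) (M : 'M[K]_3).

Definition v3 (x0 x1 x2 : K) : 'rV[K]_3 := \row_(j < 3) nth 0 [:: x0; x1; x2] j.
Definition c6 (a b e f g h : K) : 'rV[K]_6 :=
  \row_(j < 6) nth 0 [:: a; b; e; f; g; h] j.

Lemma v3E0 x0 x1 x2 : v3 x0 x1 x2 ord0 (inord 0) = x0.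
Proof. by rewrite mxE inordK. Qed.
Lemma v3E1 x0 x1 x2 : v3 x0 x1 x2 ord0 (inord 1) = x1.
Proof. by rewrite mxE inordK. Qed.
Lemma v3E2 x0 x1 x2 : v3 x0 x1 x2 ord0 (inord 2) = x2.
Proof. by rewrite mxE inordK. Qed.
Definition v3E := (v3E0, v3E1, v3E2).

Lemma c6E0 a b e f g h : c6 a b e f g h ord0 (inord 0) = a.
Proof. by rewrite !mxE !inordK. Qed.
Lemma c6E1 a b e f g h : c6 a b e f g h ord0 (inord 1) = b.
Proof. by rewrite !mxE !inordK. Qed.
Lemma c6E2 a b e f g h : c6 a b e f g h ord0 (inord 2) = e.
Proof. by rewrite !mxE !inordK. Qed.
Lemma c6E3 a b e f g h : c6 a b e f g h ord0 (inord 3) = f.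
Proof. by rewrite !mxE !inordK. Qed.
Lemma c6E4 a b e f g h : c6 a b e f g h ord0 (inord 4) = g.
Proof. by rewrite !mxE !inordK. Qed.
Lemma c6E5 a b e f g h : c6 a b e f g h ord0 (inord 5) = h.
Proof. by rewrite !mxE !inordK. Qed.
Definition c6E := (c6E0, c6E1, c6E2, c6E3, c6E4, c6E5).

Lemma v3_eta X : X = v3 (X ord0 (inord 0)) (X ord0 (inord 1)) (X ord0 (inord 2)).
Proof.
apply/rowP => j; rewrite mxE; case: j => [[|[|[|//]]] Hj] /=;
  by congr (X ord0 _); apply: val_inj; rewrite /= inordK.
Qed.

Lemma c6_eta c :
  c = c6 (c ord0 (inord 0)) (c ord0 (inord 1)) (c ord0 (inord 2))
         (c ord0 (inord 3)) (c ord0 (inord 4)) (c ord0 (inord 5)).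
Proof.
apply/rowP => j; rewrite mxE; case: j => [[|[|[|[|[|[|//]]]]]] Hj] /=;
  by congr (c ord0 _); apply: val_inj; rewrite /= inordK.
Qed.

Lemma v3D x0 x1 x2 y0 y1 y2 : v3 x0 x1 x2 + v3 y0 y1 y2 = v3 (x0 + y0) (x1 + y1) (x2 + y2).
Proof. by apply/rowP => j; rewrite !mxE; case: j => [[|[|[|//]]] Hj]. Qed.

Lemma v3Z k x0 x1 x2 : k *: v3 x0 x1 x2 = v3 (k * x0) (k * x1) (k * x2).
Proof. by apply/rowP => j; rewrite !mxE; case: j => [[|[|[|//]]] Hj]. Qed.

Lemma v3_0 : v3 0 0 0 = 0.
Proof. by apply/rowP => j; rewrite !mxE; case: j => [[|[|[|//]]] Hj]. Qed.

Lemma sum_ord3 (f : 'I_3 -> K) :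
  \sum_(i < 3) f i = f (inord 0) + f (inord 1) + f (inord 2).
Proof.
rewrite !big_ord_recl big_ord0 addr0 addrA.
by congr (f _ + f _ + f _); apply: val_inj; rewrite /= inordK.
Qed.

Local Notation "M `_( i , j )" := (M (inord i) (inord j)) (at level 3).

Lemma v3_mulmx x0 x1 x2 M : v3 x0 x1 x2 *m M =
  v3 (x0 * M`_(0, 0) + x1 * M`_(1, 0) + x2 * M`_(2, 0))
     (x0 * M`_(0, 1) + x1 * M`_(1, 1) + x2 * M`_(2, 1))
     (x0 * M`_(0, 2) + x1 * M`_(1, 2) + x2 * M`_(2, 2)).
Proof.
apply/rowP => j; rewrite !mxE sum_ord3 !mxE !inordK //=.
case: j => [[|[|[|//]]] Hj] /=;
  by congr (_ * M _ _ + _ * M _ _ + _ * M _ _); apply: val_inj; rewrite /= ?inordK.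
Qed.

Lemma det_mx3 M : \det M =
  M`_(0, 0) * (M`_(1, 1) * M`_(2, 2) - M`_(1, 2) * M`_(2, 1))
  - M`_(0, 1) * (M`_(1, 0) * M`_(2, 2) - M`_(1, 2) * M`_(2, 0))
  + M`_(0, 2) * (M`_(1, 0) * M`_(2, 1) - M`_(1, 1) * M`_(2, 0)).
Proof.
rewrite (expand_det_row _ ord0) sum_ord3 /cofactor.
rewrite !(expand_det_row _ ord0) !big_ord_recl !big_ord0 /cofactor.
rewrite !det_mx11 !mxE.
pose g (a b : nat) := M (inord a) (inord b).
have E (i j : 'I_3) : M i j = g i j by rewrite /g !inord_val.
by rewrite !E /= !inordK //= /g /bump /=; ring.
Qed.

Lemma rows3_0 j X Y Z : rows3 X Y Z (inord 0) j = X ord0 j.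
Proof. by rewrite mxE inordK. Qed.
Lemma rows3_1 j X Y Z : rows3 X Y Z (inord 1) j = Y ord0 j.
Proof. by rewrite mxE inordK. Qed.
Lemma rows3_2 j X Y Z : rows3 X Y Z (inord 2) j = Z ord0 j.
Proof. by rewrite mxE inordK. Qed.
Definition rows3E := (rows3_0, rows3_1, rows3_2).

Lemma det_rows3 X Y Z : \det (rows3 X Y Z) =
  X ord0 (inord 0) * (Y ord0 (inord 1) * Z ord0 (inord 2) - Y ord0 (inord 2) * Z ord0 (inord 1))
  - X ord0 (inord 1) * (Y ord0 (inord 0) * Z ord0 (inord 2) - Y ord0 (inord 2) * Z ord0 (inord 0))
  + X ord0 (inord 2) * (Y ord0 (inord 0) * Z ord0 (inord 1) - Y ord0 (inord 1) * Z ord0 (inord 0)).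
Proof. by rewrite det_mx3 !rows3E. Qed.

Lemma v3_mul_rows3 x0 x1 x2 X Y Z :
  v3 x0 x1 x2 *m rows3 X Y Z = x0 *: X + x1 *: Y + x2 *: Z.
Proof.
rewrite v3_mulmx !rows3E (v3_eta X) (v3_eta Y) (v3_eta Z) !v3Z !v3D.
by rewrite -!(v3_eta X, v3_eta Y, v3_eta Z).
Qed.

Lemma row_rows3 X Y Z :
  [/\ row (inord 0) (rows3 X Y Z) = X, row (inord 1) (rows3 X Y Z) = Y
    & row (inord 2) (rows3 X Y Z) = Z].
Proof. by split; apply/rowP => j; rewrite !mxE inordK. Qed.

Lemma rows3_mulmx X Y Z M : rows3 (X *m M) (Y *m M) (Z *m M) = rows3 X Y Z *m M.
Proof.
apply/row_matrixP => i; rewrite row_mul; have [r0 r1 r2] := row_rows3 X Y Z.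
have [s0 s1 s2] := row_rows3 (X *m M) (Y *m M) (Z *m M).
rewrite -[i]inord_val; case: i => [[|[|[|//]]] Hi] /=.
- by rewrite r0 s0.
- by rewrite r1 s1.
- by rewrite r2 s2.
Qed.

Definition bil c X Y := qform c (X + Y) - qform c X - qform c Y.

Lemma qform_v3 c x0 x1 x2 : qform c (v3 x0 x1 x2) =
  c ord0 (inord 0) * x0 ^+ 2 + c ord0 (inord 1) * x1 ^+ 2 + c ord0 (inord 2) * x2 ^+ 2
  + c ord0 (inord 3) * x1 * x2 + c ord0 (inord 4) * x0 * x2 + c ord0 (inord 5) * x0 * x1.
Proof. by rewrite /qform !v3E. Qed.

Lemma qformZ k c X : qform c (k *: X) = k ^+ 2 * qform c X.
Proof. by rewrite (v3_eta X) v3Z !qform_v3; ring. Qed.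

Lemma qform_scale k c X : qform (k *: c) X = k * qform c X.
Proof. by rewrite /qform !mxE; ring. Qed.

Lemma qform_inj c d : (forall X, qform c X = qform d X) -> c = d.
Proof.
move=> E; rewrite (c6_eta c) (c6_eta d).
have := E (v3 1 0 0); have := E (v3 0 1 0); have := E (v3 0 0 1).
have := E (v3 0 1 1); have := E (v3 1 0 1); have := E (v3 1 1 0).
rewrite !qform_v3 !expr1n !expr0n /= !(mulr0, mul0r, mulr1, addr0, add0r).
move=> E5 E4 E3 E2 E1 E0; rewrite E0 E1 E2 in E3 E4 E5 *.
by rewrite (addrI _ E3) (addrI _ E4) (addrI _ E5).
Qed.

Definition pullback c M :=
  c6 (qform c (row (inord 0) M)) (qform c (row (inord 1) M)) (qform c (row (inord 2) M))
     (bil c (row (inord 1) M) (row (inord 2) M)) (bil c (row (inord 0) M) (row (inord 2) M))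
     (bil c (row (inord 0) M) (row (inord 1) M)).

Lemma row_v3 M i : row (inord i) M = v3 (M (inord i) (inord 0)) (M (inord i) (inord 1))
  (M (inord i) (inord 2)).
Proof. by rewrite {1}(v3_eta (row _ M)) !mxE. Qed.

Lemma qform_pullback c X M : qform c (X *m M) = qform (pullback c M) X.
Proof.
rewrite (v3_eta X) v3_mulmx /pullback /bil !row_v3 !v3D !qform_v3 !c6E; ring.
Qed.

Definition hdet c :=
  4 * c ord0 (inord 0) * c ord0 (inord 1) * c ord0 (inord 2)
  + c ord0 (inord 3) * c ord0 (inord 4) * c ord0 (inord 5)
  - c ord0 (inord 0) * c ord0 (inord 3) ^+ 2 - c ord0 (inord 1) * c ord0 (inord 4) ^+ 2
  - c ord0 (inord 2) * c ord0 (inord 5) ^+ 2.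

Lemma nondeg_conicE c : nondeg_conic c = (hdet c != 0).
Proof. by []. Qed.

Lemma hdet_pullback c M : hdet (pullback c M) = \det M ^+ 2 * hdet c.
Proof. by rewrite /hdet /pullback !c6E /bil !row_v3 !v3D !qform_v3 det_mx3; ring. Qed.

Lemma qform_lin c s t X Y :
  qform c (s *: X + t *: Y) = s ^+ 2 * qform c X + s * t * bil c X Y + t ^+ 2 * qform c Y.
Proof. by rewrite /bil (v3_eta X) (v3_eta Y) !v3Z !v3D !qform_v3; ring. Qed.

Lemma bil_image c d k M : (forall X, qform d (X *m M) = k * qform c X) ->
  forall X Y, bil d (X *m M) (Y *m M) = k * bil c X Y.
Proof. by move=> dM X Y; rewrite /bil -mulmxDl !dM; ring. Qed.

End Coordinates.

Section MapCoordinates.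
Variables (K K' : comNzRingType) (f : {rmorphism K -> K'}).
Implicit Types (X Y : 'rV[K]_3) (c : 'rV[K]_6).

Lemma qform_map c X : qform (map_mx f c) (map_mx f X) = f (qform c X).
Proof. by rewrite /qform !mxE !(rmorphD, rmorphM, rmorphXn). Qed.

Lemma bil_map c X Y : bil (map_mx f c) (map_mx f X) (map_mx f Y) = f (bil c X Y).
Proof. by rewrite /bil -map_mxD !qform_map !rmorphB. Qed.

Lemma hdet_map c : hdet (map_mx f c) = f (hdet c).
Proof. by rewrite /hdet !mxE !(rmorphD, rmorphN, rmorphM, rmorphXn, rmorph1); ring. Qed.

End MapCoordinates.

Section ProjectivePlane.
Variable K : fieldType.
Implicit Types (X Y Z B P : 'rV[K]_3) (c : 'rV[K]_6).

Lemma prop_pt_sym X Y : prop_pt X Y -> prop_pt Y X.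
Proof.
case=> t t_neq0 ->; exists t^-1; first by rewrite invr_eq0.
by rewrite scalerA mulVf // scale1r.
Qed.

Lemma prop_ptP a b X Y : X != 0 -> a != 0 -> a *: X = b *: Y -> prop_pt X Y.
Proof.
move=> X_neq0 a_neq0 E; exists (b / a); last first.
  by apply: (scalerI a_neq0); rewrite E scalerA mulrC divfK.
apply: contraNneq X_neq0 => /eqP; rewrite mulf_eq0 invr_eq0 (negbTE a_neq0) orbF.
by move/eqP=> b0; rewrite -(scalerK a_neq0 X) E b0 !scale0r scaler0.
Qed.

Lemma det_rows3_eq0 X Y Z : X != 0 -> Y != 0 -> ~ prop_pt X Y ->
  \det (rows3 X Y Z) = 0 -> exists s t, Z = s *: X + t *: Y.
Proof.
move=> X_neq0 Y_neq0 nXY /eqP /det0P [w w_neq0].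
rewrite (v3_eta w) v3_mul_rows3; set w0 := w _ _; set w1 := w _ _; set w2 := w _ _.
move=> /eqP; rewrite addr_eq0 => /eqP E.
have [w2_0 | w2_neq0] := eqVneq w2 0.
  exfalso; move: E; rewrite w2_0 scale0r oppr0 => /eqP; rewrite addr_eq0 => /eqP E.
  have [w1_0 | w1_neq0] := eqVneq w1 0.
    move: E; rewrite w1_0 scale0r oppr0 => /eqP; rewrite scaler_eq0 (negbTE X_neq0) orbF.
    by move=> /eqP w0_0; move: w_neq0; rewrite (v3_eta w) -/w0 -/w1 -/w2 w0_0 w1_0 w2_0 v3_0 eqxx.
  by apply/nXY/prop_pt_sym/(prop_ptP (b := - w0) Y_neq0 w1_neq0); rewrite scaleNr E opprK.
exists (- w0 / w2), (- w1 / w2); apply: (scalerI w2_neq0).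
by rewrite scalerDr !scalerA ![w2 * _]mulrC !divfK // !scaleNr -opprD E opprK.
Qed.

Lemma tangent_at_polar c B Y : B != 0 -> qform c B = 0 -> Y != 0 -> ~ prop_pt B Y ->
  bil c B Y = 0 -> qform c Y != 0 -> tangent_at c B B Y.
Proof.
move=> B_neq0 cB Y_neq0 nBY cBY cY; split=> //; first by split=> //; rewrite det_rows3; ring.
move=> P [P_neq0 cP] [_ _ _ /(det_rows3_eq0 B_neq0 Y_neq0 nBY) [s [t EP]]].
move: cP; rewrite EP qform_lin cB cBY !mulr0 !add0r => /eqP.
rewrite mulf_eq0 (negbTE cY) orbF expf_eq0 /= => /eqP t0.
move: P_neq0; rewrite EP t0 scale0r addr0 => P_neq0.
by apply: (prop_ptP (a := 1) P_neq0 (oner_neq0 _)); rewrite scale1r.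
Qed.

Lemma prop_pt_invmx M X : M \in unitmx -> prop_pt (X *m invmx M) X -> prop_pt (X *m M) X.
Proof.
move=> M_unit [t t_neq0 E]; apply: prop_pt_sym; exists t => //.
by rewrite scalemxAl -E mulmxKV.
Qed.

End ProjectivePlane.

(* The two equations on [x] say that (a x1 x2, b x0 x2, e x0 x1) is orthogonal to
   (1, 1, 1) and (l0, l1, l2), hence proportional to (l2 - l1, l0 - l2, l1 - l0);
   so each of these three entries times the determinant is a multiple of the
   equation on [y]. *)
Lemma triangle_collinear_certificate (K : fieldType)
    (a b e l0 l1 l2 x0 x1 x2 y0 y1 y2 : K) :
  a != 0 -> b != 0 -> e != 0 -> [|| x1 * x2 != 0, x0 * x2 != 0 | x0 * x1 != 0] ->
  a * x1 * x2 + b * x0 * x2 + e * x0 * x1 = 0 ->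
  l0 * a * x1 * x2 + l1 * b * x0 * x2 + l2 * e * x0 * x1 = 0 ->
  a * y1 * y2 + b * y0 * y2 + e * y0 * y1 = 0 ->
  y0 * (l1 * y1 * x2 - l2 * y2 * x1) - y1 * (l0 * y0 * x2 - l2 * y2 * x0)
    + y2 * (l0 * y0 * x1 - l1 * y1 * x0) = 0.
Proof.
move=> a_neq0 b_neq0 e_neq0 x_nonvertex Ex Elx Ey.
set D := y0 * _ - _ + _.
have comb (u s t r : K) : s * 0 + t * 0 + r * 0 = u -> u = 0.
  by move=> <-; rewrite !mulr0 !addr0.
have Da : a * x1 * x2 * D = 0.
  apply: (comb _ ((l2 - l1) * x0 * x1 * x2) (x2 * y0 * y1 * l1 - x1 * y0 * y2 * l2)
    (x1 * y0 * y2 - x2 * y0 * y1)); rewrite -{1}Ey -{1}Ex -Elx /D; ring.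
have Db : b * x0 * x2 * D = 0.
  apply: (comb _ ((l0 - l2) * x0 * x1 * x2) (x0 * y1 * y2 * l2 - x2 * y0 * y1 * l0)
    (x2 * y0 * y1 - x0 * y1 * y2)); rewrite -{1}Ey -{1}Ex -Elx /D; ring.
have De : e * x0 * x1 * D = 0.
  apply: (comb _ ((l1 - l0) * x0 * x1 * x2) (x1 * y0 * y2 * l0 - x0 * y1 * y2 * l1)
    (x0 * y1 * y2 - x1 * y0 * y2)); rewrite -{1}Ey -{1}Ex -Elx /D; ring.
have nz_mul (u v w : K) : u != 0 -> v * w != 0 -> u * v * w * D = 0 -> D = 0.
  move=> u_neq0 vw_neq0 /eqP; rewrite -(mulrA u) mulf_eq0 mulf_eq0.
  by rewrite (negbTE u_neq0) (negbTE vw_neq0) => /eqP.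
by case/or3P: x_nonvertex => nz; [apply: nz_mul Da | apply: nz_mul Db | apply: nz_mul De].
Qed.

Section TriangleFrame.
Variables (K : fieldType) (v0 v1 v2 : 'rV[K]_3) (c : 'rV[K]_6).
Hypothesis frame_unit : rows3 v0 v1 v2 \in unitmx.
Hypotheses (c_v0 : qform c v0 = 0) (c_v1 : qform c v1 = 0) (c_v2 : qform c v2 = 0).
Local Notation V := (rows3 v0 v1 v2).
Local Notation a := (bil c v1 v2).
Local Notation b := (bil c v0 v2).
Local Notation e := (bil c v0 v1).

Lemma frame_coords X : exists x0 x1 x2, X = v3 x0 x1 x2 *m V.
Proof.
exists ((X *m invmx V) ord0 (inord 0)), ((X *m invmx V) ord0 (inord 1)),
  ((X *m invmx V) ord0 (inord 2)).
by rewrite -v3_eta mulmxKV.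
Qed.

Lemma pullback_frame : pullback c V = c6 0 0 0 a b e.
Proof. by have [r0 r1 r2] := row_rows3 v0 v1 v2; rewrite /pullback r0 r1 r2 c_v0 c_v1 c_v2. Qed.

Lemma qform_frame x0 x1 x2 :
  qform c (v3 x0 x1 x2 *m V) = a * x1 * x2 + b * x0 * x2 + e * x0 * x1.
Proof. by rewrite qform_pullback pullback_frame qform_v3 !c6E; ring. Qed.

Lemma frame_coef_neq0 : nondeg_conic c -> [/\ a != 0, b != 0 & e != 0].
Proof.
rewrite nondeg_conicE => c_nondeg.
have : hdet (pullback c V) != 0.
  by rewrite hdet_pullback mulf_neq0 // expf_neq0 // -unitfE -unitmxE.
rewrite pullback_frame (_ : hdet _ = a * b * e); last by rewrite /hdet !c6E; ring.
by rewrite !mulf_eq0 !negb_or => /andP [/andP [-> ->] ->].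
Qed.

Lemma frame_nonvertex x0 x1 x2 (B := v3 x0 x1 x2 *m V) : B != 0 ->
  ~ prop_pt B v0 -> ~ prop_pt B v1 -> ~ prop_pt B v2 ->
  [|| x1 * x2 != 0, x0 * x2 != 0 | x0 * x1 != 0].
Proof.
rewrite /B v3_mul_rows3 => B_neq0 nB0 nB1 nB2.
have vertex x (v : 'rV[K]_3) : x *: v != 0 -> prop_pt (x *: v) v.
  by move=> xv_neq0; exists x => //; apply: contraNneq xv_neq0 => ->; rewrite scale0r.
apply: contraT; rewrite !negb_or !negbK !mulf_eq0 => /and3P [/orP h12 /orP h02 /orP h01].
case: h12 => /eqP z1; [case: h02 | case: h01] => /eqP z2;
  move: B_neq0 nB0 nB1 nB2; rewrite z1 z2 !scale0r ?addr0 ?add0r => B_neq0 n0 n1 n2;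
  by first [case: n0; exact: vertex | case: n1; exact: vertex | case: n2; exact: vertex].
Qed.

Variables (G : 'M[K]_3) (l0 l1 l2 : K).
Hypothesis G_unit : G \in unitmx.
Hypotheses (G_v0 : v0 *m G = l0 *: v0) (G_v1 : v1 *m G = l1 *: v1) (G_v2 : v2 *m G = l2 *: v2).
Hypotheses (l0_neq0 : l0 != 0) (l1_neq0 : l1 != 0) (l2_neq0 : l2 != 0).

Lemma frame_mulmx x0 x1 x2 :
  v3 x0 x1 x2 *m V *m G = v3 (l0 * x0) (l1 * x1) (l2 * x2) *m V.
Proof.
rewrite !v3_mul_rows3 !mulmxDl -!scalemxAl G_v0 G_v1 G_v2 !scalerA.
by rewrite (mulrC x0) (mulrC x1) (mulrC x2).
Qed.

Lemma frame_mul_invmx x0 x1 x2 :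
  v3 x0 x1 x2 *m V *m invmx G = v3 (x0 / l0) (x1 / l1) (x2 / l2) *m V.
Proof.
apply: (can_inj (mulmxK G_unit)); rewrite mulmxKV // frame_mulmx.
by rewrite ![l0 * _]mulrC ![l1 * _]mulrC ![l2 * _]mulrC !divfK.
Qed.

(* In frame coordinates both sides equal l0 a x1 x2 + l1 b x0 x2 + l2 e x0 x1
   up to the term (l0 + l1 + l2) Q(X). *)
Lemma bil_frame_mulmx X :
  bil c X (X *m G) = (l0 + l1 + l2) * qform c X - l0 * l1 * l2 * qform c (X *m invmx G).
Proof.
have [x0 [x1 [x2 ->]]] := frame_coords X.
rewrite frame_mulmx frame_mul_invmx /bil -mulmxDl v3D !qform_frame.
by field; rewrite l0_neq0 l1_neq0 l2_neq0.
Qed.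

Lemma frame_collinear B P : nondeg_conic c -> B != 0 ->
  ~ prop_pt B v0 -> ~ prop_pt B v1 -> ~ prop_pt B v2 ->
  qform c B = 0 -> qform c (B *m invmx G) = 0 -> qform c P = 0 ->
  \det (rows3 P (P *m G) B) = 0.
Proof.
move=> c_nondeg B_neq0 nB0 nB1 nB2 cB cBG cP.
have [a_neq0 b_neq0 e_neq0] := frame_coef_neq0 c_nondeg.
have [x0 [x1 [x2 EB]]] := frame_coords B; have [y0 [y1 [y2 EP]]] := frame_coords P.
rewrite EB in B_neq0 nB0 nB1 nB2.
have x_nonvertex := frame_nonvertex B_neq0 nB0 nB1 nB2.
move: cB cBG cP; rewrite EB EP frame_mul_invmx !qform_frame => Ex ExG Ey.
have Elx : l0 * a * x1 * x2 + l1 * b * x0 * x2 + l2 * e * x0 * x1 = 0.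
  by rewrite -(mulr0 (l0 * l1 * l2)) -ExG; field; rewrite l0_neq0 l1_neq0 l2_neq0.
rewrite frame_mulmx rows3_mulmx det_mulmx det_rows3 !v3E.
by rewrite (triangle_collinear_certificate a_neq0 b_neq0 e_neq0 x_nonvertex Ex Elx Ey) mul0r.
Qed.

End TriangleFrame.

Lemma eigenvectors_unitmx (K : fieldType) (M : 'M[K]_3) (v0 v1 v2 : 'rV[K]_3)
    (mu0 mu1 mu2 : K) :
  v0 *m M = mu0 *: v0 -> v1 *m M = mu1 *: v1 -> v2 *m M = mu2 *: v2 ->
  v0 != 0 -> v1 != 0 -> v2 != 0 -> mu0 != mu1 -> mu0 != mu2 -> mu1 != mu2 ->
  rows3 v0 v1 v2 \in unitmx.
Proof.
move=> E0 E1 E2 v0_neq0 v1_neq0 v2_neq0 d01 d02 d12.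
have shift2 (v : 'rV[K]_3) mu a b : v *m M = mu *: v ->
    v *m ((M - a%:M) *m (M - b%:M)) = ((mu - a) * (mu - b)) *: v.
  move=> Ev; have shift c : v *m (M - c%:M) = (mu - c) *: v.
    by rewrite mulmxBr mul_mx_scalar Ev scalerBl.
  by rewrite mulmxA shift -scalemxAl shift scalerA.
have coef0 (p q r : 'rV[K]_3) mp mq mr wp wq wr :
    p *m M = mp *: p -> q *m M = mq *: q -> r *m M = mr *: r ->
    p != 0 -> mp != mq -> mp != mr -> wp *: p + wq *: q + wr *: r = 0 -> wp = 0.
  move=> Ep Eq Er p_neq0 dpq dpr /(congr1 (mulmx^~ ((M - mq%:M) *m (M - mr%:M)))) /=.
  rewrite mul0mx 2!mulmxDl -!scalemxAl (shift2 _ _ _ _ Ep) (shift2 _ _ _ _ Eq).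
  rewrite (shift2 _ _ _ _ Er) !subrr mul0r mulr0 !scale0r !scaler0 !addr0 scalerA.
  move/eqP; rewrite scaler_eq0 (negbTE p_neq0) orbF !mulf_eq0 !subr_eq0.
  by rewrite (negbTE dpq) (negbTE dpr) !orbF => /eqP.
rewrite unitmxE unitfE; apply/negP => /det0P [w w_neq0].
rewrite (v3_eta w) v3_mul_rows3.
set w0 := w _ (inord 0); set w1 := w _ (inord 1); set w2 := w _ (inord 2) => Ew.
have w0_0 : w0 = 0 by apply: (coef0 _ _ _ _ _ _ _ w1 w2 E0 E1 E2 v0_neq0).
have w1_0 : w1 = 0.
  apply: (coef0 _ _ _ _ _ _ _ w0 w2 E1 E0 E2 v1_neq0) => //; first by rewrite eq_sym.
  by rewrite -Ew (addrC (w0 *: v0)).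
have w2_0 : w2 = 0.
  by apply: (coef0 _ _ _ _ _ _ _ w0 w1 E2 E0 E1 v2_neq0); rewrite 1?eq_sym // -Ew [RHS]addrC addrA.
by move: w_neq0; rewrite (v3_eta w) -/w0 -/w1 -/w2 w0_0 w1_0 w2_0 v3_0 eqxx.
Qed.

Section Singer.
Variables (F : finFieldType) (S : 'M[F]_3).
Hypothesis S_singer : is_singer S.
Local Notation n := (singer_order F).

Lemma singer_order_gt1 : (1 < n)%N.
Proof. by rewrite /singer_order addn1 ltnS addn_gt0 (ltnW (finNzRing_gt1 F)) orbT. Qed.

Lemma singer_unitmx : S \in unitmx.
Proof. by case: S_singer. Qed.

Lemma singer_exp_order : exists2 s : F, s != 0 & S ^+ n = s%:M.
Proof.
case: S_singer => S_unit [s Es] _ _; exists s => //; apply: contraTneq (unitrX n S_unit).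
by rewrite Es => ->; rewrite unitmxE det_scalar expr0n unitr0.
Qed.

Lemma singer_exp_unitmx k : S ^+ k \in unitmx.
Proof. by rewrite unitrX // singer_unitmx. Qed.

Lemma mulmx_singer_exp_eq0 k (X : 'rV[F]_3) : (X *m S ^+ k == 0) = (X == 0).
Proof. by rewrite mulmx_free_eq0 // row_free_unit singer_exp_unitmx. Qed.

Lemma mulmx_singer_exp_inv_eq0 k (X : 'rV[F]_3) : (X *m invmx (S ^+ k) == 0) = (X == 0).
Proof. by rewrite mulmx_free_eq0 // row_free_unit unitmx_inv singer_exp_unitmx. Qed.

Lemma singer_exp_modn m : exists2 t : F, t != 0 & S ^+ m = t *: S ^+ (m %% n).
Proof.
have [s s_neq0 Es] := singer_exp_order.
exists (s ^+ (m %/ n)); first by rewrite expf_neq0.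
rewrite {1}(divn_eq m n) exprD mulnC exprM Es -scalemx1 exprZn expr1n.
by rewrite -scalerAl mul1r.
Qed.

Lemma singer_fixed_dvdn (u : 'rV[F]_3) m :
  u != 0 -> prop_pt (u *m S ^+ m) u -> (n %| m)%N.
Proof.
move=> u_neq0 [k k_neq0 Ek]; have [t t_neq0 Et] := singer_exp_modn m.
have fixed_mod : prop_pt (u *m S ^+ (m %% n)) u.
  exists (k / t); first by rewrite mulf_neq0 ?invr_eq0.
  by apply: (scalerI t_neq0); rewrite scalemxAr -Et Ek scalerA mulrC divfK.
have fixed0 : prop_pt (u *m S ^+ 0) u by exists 1; rewrite ?oner_neq0 ?mulmx1 ?scale1r.
case: S_singer => _ _ _ /(_ u u u_neq0 u_neq0) [k0 [_ _ uniq_k0]].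
have n_gt0 : (0 < n)%N := ltnW singer_order_gt1.
by apply/eqP; rewrite (uniq_k0 _ (ltn_pmod m n_gt0) fixed_mod) (uniq_k0 0%N).
Qed.

Lemma singer_exp_scalar m : (n %| m)%N -> exists2 t : F, t != 0 & S ^+ m = t%:M.
Proof.
move=> /eqP n_dvd_m; have [t t_neq0 Et] := singer_exp_modn m.
by exists t => //; rewrite Et n_dvd_m expr0 scalemx1.
Qed.

Lemma singer_exp_fixfree c c' k : image_conic c c' (S ^+ k) -> ~ same_conic c c' ->
  forall u : 'rV[F]_3, u != 0 -> ~ prop_pt (u *m S ^+ k) u.
Proof.
move=> [kap kap_neq0 c'_img] c_neq_c' u u_neq0 u_fixed.
have [t t_neq0 Et] := singer_exp_scalar (singer_fixed_dvdn u_neq0 u_fixed).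
apply: c_neq_c'; exists (kap / t ^+ 2); first by rewrite mulf_neq0 ?invr_eq0 ?expf_neq0.
apply: qform_inj => X; rewrite qform_scale.
have := c'_img (t^-1 *: X); rewrite Et mul_mx_scalar scalerA mulfV // scale1r qformZ => ->.
by rewrite exprVn mulrA.
Qed.

Lemma singer_no_eigenvector (r : F) (v : 'rV[F]_3) : v != 0 -> v *m S != r *: v.
Proof.
move=> v_neq0; apply/eqP => Ev.
have [r0 | r_neq0] := eqVneq r 0.
  by move: v_neq0; rewrite -(mulmxK singer_unitmx v) Ev r0 scale0r mul0mx eqxx.
have := singer_fixed_dvdn (m := 1) v_neq0; rewrite expr1 => /(_ (ex_intro2 _ _ r r_neq0 Ev)).
by rewrite dvdn1; have := singer_order_gt1; case: eqP => // ->.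
Qed.

Lemma singer_char_poly_no_root r : ~~ root (char_poly S) r.
Proof.
apply/negP; rewrite -eigenvalue_root_char => /eigenvalueP [v Ev v_neq0].
by move/eqP: Ev; apply/negP/singer_no_eigenvector.
Qed.

Lemma singer_degree_mxminpoly : degree_mxminpoly S = 3%N.
Proof.
have chi_neq0 : char_poly S != 0 by rewrite monic_neq0 // char_poly_monic.
have dvd_chi := mxminpoly_dvd_char S.
have := dvdp_leq chi_neq0 dvd_chi; rewrite size_char_poly size_mxminpoly.
have := mxminpoly_nonconstant S; have size_min := size_mxminpoly S.
case: (degree_mxminpoly S) size_min => [|[|[|[|d]]]] // size_min _ _.
  have [r Er] := poly2_root size_min.
  by move: (singer_char_poly_no_root r); rewrite -root_mxminpoly Er.
case/dvdpP: dvd_chi => r Er.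
have r_neq0 : r != 0 by apply: contra_neq chi_neq0 => r0; rewrite Er r0 mul0r.
have min_neq0 : mxminpoly S != 0 by rewrite -size_poly_gt0 size_min.
have := size_char_poly S; rewrite Er size_mul // size_min addnS /= => size_r.
have {}size_r : size r = 2%N by apply: (@addIn 2%N); rewrite size_r.
have [z Ez] := poly2_root size_r.
by move: (singer_char_poly_no_root z); rewrite Er rootM Ez.
Qed.

Lemma singer_exp_card3 : S ^+ (#|F| ^ 3) = S.
Proof.
have [s s_neq0 Es] := singer_exp_order.
have q_gt0 : (0 < #|F|)%N := ltnW (finNzRing_gt1 F).
have -> : (#|F| ^ 3 = n * #|F|.-1 + 1)%N.
  by rewrite /singer_order; move: q_gt0; case: #|F| => // q _ /=; rewrite !expnS expn0; ring.
have s_exp : s ^+ #|F|.-1 = 1.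
  by apply: (mulIf s_neq0); rewrite -exprSr prednK // expf_card mul1r.
by rewrite exprD expr1 exprM Es -scalemx1 exprZn expr1n s_exp scale1r mul1r.
Qed.

End Singer.

Section ExtensionField.
Variables (F : fieldType) (L : fieldExtType F).
Implicit Types (u X : 'rV[F]_3) (H M : 'M[F]_3) (v : 'rV[L]_3) (c : 'rV[F]_6).

Lemma ext_mxM m n p (A : 'M[F]_(m, n)) (B : 'M[F]_(n, p)) :
  ext_mx L (A *m B) = ext_mx L A *m ext_mx L B.
Proof. exact: map_mxM. Qed.

Lemma qform_ext c X : qform (ext_mx L c) (ext_mx L X) = (qform c X)%:A.
Proof. exact: qform_map. Qed.

Lemma bil_ext c X Y : bil (ext_mx L c) (ext_mx L X) (ext_mx L Y) = (bil c X Y)%:A.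
Proof. exact: bil_map. Qed.

Lemma nondeg_conic_ext c : nondeg_conic c -> nondeg_conic (ext_mx L c).
Proof. by rewrite !nondeg_conicE hdet_map fmorph_eq0. Qed.

Lemma ext_eigenvector_rational M u (mu : L) :
  u != 0 -> ext_mx L u *m ext_mx L M = mu *: ext_mx L u -> exists r : F, u *m M = r *: u.
Proof.
move=> u_neq0 Eu.
have Euj j : ((u *m M) ord0 j)%:A = mu * (u ord0 j)%:A :> L.
  by have := congr1 (fun w : 'rV[L]_3 => w ord0 j) Eu; rewrite -ext_mxM !mxE.
have [j uj_neq0] : exists j, u ord0 j != 0.
  apply/existsP; apply: contraR u_neq0; rewrite negb_exists => /forallP u0.
  by apply/eqP/rowP => j; rewrite mxE; apply/eqP/negPn/u0.
exists ((u *m M) ord0 j / u ord0 j); apply: (map_mx_inj (f := in_alg L)).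
rewrite map_mxM map_mxZ /= -[map_mx _ _]/(ext_mx L _) Eu; congr (_ *: _).
by rewrite -in_algE fmorph_div /= Euj mulfK // scaler_eq0 oner_eq0 orbF.
Qed.

Lemma delta_vertex_exp M v k : delta_vertex L M v -> delta_vertex L (M ^+ k) v.
Proof.
case=> v_neq0 [mu mu_neq0 Ev]; split=> //; exists (mu ^+ k); first exact: expf_neq0.
rewrite /ext_mx rmorphXn /=; elim: k => [|k IHk]; first by rewrite !expr0 mulmx1 scale1r.
by rewrite exprSr mulmxA IHk -scalemxAl Ev scalerA -exprSr.
Qed.

Lemma delta_vertex_invmx H v : H \in unitmx -> delta_vertex L H v -> delta_vertex L (invmx H) v.
Proof.
move=> H_unit [v_neq0 [mu mu_neq0 Ev]]; split=> //; exists mu^-1; first by rewrite invr_eq0.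
have HL_unit : ext_mx L H \in unitmx by rewrite map_unitmx.
apply: (scalerI mu_neq0); rewrite scalerA mulfV // scale1r /ext_mx map_invmx.
by rewrite scalemxAl -Ev mulmxK.
Qed.

End ExtensionField.

Section CircumscribedBundle.
Variables (F : finFieldType) (L : fieldExtType F) (S : 'M[F]_3).
Hypotheses (L_dim3 : \dim {: L} = 3%N) (S_singer : is_singer S).

(* The minimal polynomial of S has degree 3 and divides X^(q^3) - X, whose roots
   are the q^3 elements of L. *)
Lemma singer_ext_eigenvalues : exists mu0 mu1 mu2 : L,
  [/\ mu0 != mu1, mu0 != mu2, mu1 != mu2 &
   [/\ eigenvalue (ext_mx L S) mu0, eigenvalue (ext_mx L S) mu1
     & eigenvalue (ext_mx L S) mu2]].
Proof.
set N := (#|F| ^ 3)%N.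
have min_dvd : mxminpoly S %| 'X^N - 'X.
  apply: mxminpoly_min.
  by rewrite rmorphB rmorphXn /= horner_mx_X singer_exp_card3 // subrr.
pose finL := FinFieldExtType L.
have card_L : #|finL| = N.
  have := card_vspace (fullv : {vspace finvect_type L}).
  by rewrite card_vspacef => ->; rewrite /N; congr (_ ^ _)%N.
have min_dvd_prod : map_poly (in_alg L) (mxminpoly S) %| \prod_(x <- enum finL) ('X - (x : L)%:P).
  rewrite big_enum /= -(finField_genPoly finL) card_L.
  have -> : 'X^N - 'X = map_poly (in_alg L) ('X^N - 'X : {poly F}).
    by rewrite rmorphB /= map_polyXn map_polyX.
  by rewrite dvdp_map.
have [m Em] := dvdp_prod_XsubC min_dvd_prod.
have := eqp_size Em; rewrite size_prod_XsubC -mxminpoly_map size_mxminpoly.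
rewrite degree_mxminpoly_map singer_degree_mxminpoly //.
have uniq_roots : uniq (mask m (enum finL)) by apply/mask_uniq/enum_uniq.
have roots x : x \in mask m (enum finL) -> eigenvalue (ext_mx L S) x.
  by move=> x_in; rewrite eigenvalue_root_min mxminpoly_map (eqp_root Em) root_prod_XsubC.
move: uniq_roots roots; case: (mask m (enum finL)) => [|a [|b [|c' [|]]]] //= + + _.
rewrite !inE !negb_or => /and3P [/andP [ab ac] bc _] roots.
by exists a, b, c'; split => //; split; apply: roots; rewrite !inE eqxx ?orbT.
Qed.

Lemma delta_frame : exists v0 v1 v2 : 'rV[L]_3,
  [/\ delta_vertex L S v0, delta_vertex L S v1, delta_vertex L S v2
    & rows3 v0 v1 v2 \in unitmx].
Proof.
have [mu0 [mu1 [mu2 [d01 d02 d12 [e0 e1 e2]]]]] := singer_ext_eigenvalues.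
case/eigenvalueP: e0 => v0 E0 v0_neq0; case/eigenvalueP: e1 => v1 E1 v1_neq0.
case/eigenvalueP: e2 => v2 E2 v2_neq0.
have SL_unit : ext_mx L S \in unitmx by rewrite map_unitmx singer_unitmx.
have vertex v mu : v *m ext_mx L S = mu *: v -> v != 0 -> delta_vertex L S v.
  move=> Ev v_neq0; split=> //; exists mu => //; apply: contraNneq v_neq0 => mu_0.
  by rewrite -(mulmxK SL_unit v) Ev mu_0 scale0r mul0mx.
exists v0, v1, v2; split; [exact: vertex E0 _ | exact: vertex E1 _ | exact: vertex E2 _ |].
exact: (eigenvectors_unitmx E0 E1 E2).
Qed.

Lemma ext_not_delta_vertex (u : 'rV[F]_3) v :
  u != 0 -> delta_vertex L S v -> ~ prop_pt (ext_mx L u) v.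
Proof.
move=> u_neq0 [_ [mu _ Ev]] [t _ Eu].
have /ext_eigenvector_rational [//|r Er] : ext_mx L u *m ext_mx L S = mu *: ext_mx L u.
  by rewrite Eu -scalemxAl Ev !scalerA mulrC.
by move/eqP: Er; apply/negP/singer_no_eigenvector.
Qed.

Variables (c : 'rV[F]_6) (H : 'M[F]_3).
Hypotheses (c_bundle : in_bundle L S c) (H_unit : H \in unitmx).
Hypothesis H_fixes_delta : forall v, delta_vertex L S v -> delta_vertex L H v.

Lemma ext_mul_invmx (X : 'rV[F]_3) :
  ext_mx L (X *m invmx H) = ext_mx L X *m invmx (ext_mx L H).
Proof. by rewrite ext_mxM /ext_mx map_invmx. Qed.

Lemma bundle_polar (X : 'rV[F]_3) :
  qform c X = 0 -> qform c (X *m invmx H) = 0 -> bil c X (X *m H) = 0.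
Proof.
move=> cX cXH; have [v0 [v1 [v2 [d0 d1 d2 V_unit]]]] := delta_frame.
have [_ [l0 l0_neq0 H0]] := H_fixes_delta d0.
have [_ [l1 l1_neq0 H1]] := H_fixes_delta d1.
have [_ [l2 l2_neq0 H2]] := H_fixes_delta d2.
have HL_unit : ext_mx L H \in unitmx by rewrite map_unitmx.
apply/eqP; rewrite -(fmorph_eq0 (in_alg L)) /= -bil_ext ext_mxM.
rewrite (bil_frame_mulmx V_unit (c_bundle.2 _ d0) (c_bundle.2 _ d1) (c_bundle.2 _ d2)
  HL_unit H0 H1 H2 l0_neq0 l1_neq0 l2_neq0).
by rewrite -ext_mul_invmx !qform_ext cX cXH !scale0r !mulr0 subrr.
Qed.

Lemma bundle_collinear (B P : 'rV[F]_3) : B != 0 ->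
  qform c B = 0 -> qform c (B *m invmx H) = 0 -> qform c P = 0 ->
  \det (rows3 P (P *m H) B) = 0.
Proof.
move=> B_neq0 cB cBH cP; have [v0 [v1 [v2 [d0 d1 d2 V_unit]]]] := delta_frame.
have [_ [l0 l0_neq0 H0]] := H_fixes_delta d0.
have [_ [l1 l1_neq0 H1]] := H_fixes_delta d1.
have [_ [l2 l2_neq0 H2]] := H_fixes_delta d2.
have HL_unit : ext_mx L H \in unitmx by rewrite map_unitmx.
have BL_neq0 : ext_mx L B != 0 by rewrite map_mx_eq0.
apply/eqP; rewrite -(fmorph_eq0 (in_alg L)) -det_map_mx /=.
rewrite -[map_mx _ (rows3 _ _ _)]/(ext_mx L (rows3 P (P *m H) B)).
have -> : ext_mx L (rows3 P (P *m H) B) = rows3 (ext_mx L P) (ext_mx L P *m ext_mx L H) (ext_mx L B).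
  by apply/matrixP => i j; rewrite -ext_mxM !mxE; case: ifP => _; [|case: ifP].
apply/eqP; apply: (frame_collinear V_unit (c_bundle.2 _ d0) (c_bundle.2 _ d1) (c_bundle.2 _ d2)
  HL_unit H0 H1 H2 l0_neq0 l1_neq0 l2_neq0 (nondeg_conic_ext _ c_bundle.1) BL_neq0).
- exact: ext_not_delta_vertex d0.
- exact: ext_not_delta_vertex d1.
- exact: ext_not_delta_vertex d2.
- by rewrite qform_ext cB scale0r.
- by rewrite -ext_mul_invmx qform_ext cBH scale0r.
- by rewrite qform_ext cP scale0r.
Qed.

End CircumscribedBundle.

Section SingerImage.
Variables (F : finFieldType) (L : fieldExtType F) (S : 'M[F]_3) (c c' : 'rV[F]_6).
Variables (k : nat) (B : 'rV[F]_3).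
Hypotheses (L_dim3 : \dim {: L} = 3%N) (S_singer : is_singer S) (c_bundle : in_bundle L S c).
Hypotheses (c_neq_c' : ~ same_conic c c') (c'_image : image_conic c c' (S ^+ k)).
Hypotheses (B_on_c : on_conic c B) (B_on_c' : on_conic c' B).
Hypothesis B_unique : forall X, on_conic c X -> on_conic c' X -> prop_pt X B.
Hypothesis c_preimage_B : qform c (B *m invmx (S ^+ k)) = 0.
Local Notation G := (S ^+ k).

Lemma delta_vertex_singer_exp v : delta_vertex L S v -> delta_vertex L G v.
Proof. exact: delta_vertex_exp. Qed.

Lemma delta_vertex_singer_exp_inv v : delta_vertex L S v -> delta_vertex L (invmx G) v.
Proof. by move/delta_vertex_singer_exp; apply/delta_vertex_invmx/singer_exp_unitmx. Qed.

Lemma singer_image_collinear P : on_conic c P -> on_line B P (P *m G).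
Proof.
case=> P_neq0 cP; split; rewrite ?(mulmx_singer_exp_eq0 S_singer) //.
  by move/prop_pt_sym; apply: (singer_exp_fixfree S_singer c'_image c_neq_c' P_neq0).
exact: (bundle_collinear L_dim3 S_singer c_bundle (singer_exp_unitmx S_singer k)
  delta_vertex_singer_exp B_on_c.1 B_on_c.2 c_preimage_B cP).
Qed.

Lemma singer_image_tangent : tangent_at c B B (B *m G).
Proof.
have [[B_neq0 cB] [_ c'B]] := (B_on_c, B_on_c'); have [kap _ c'_img] := c'_image.
have fixfree := singer_exp_fixfree S_singer c'_image c_neq_c'.
apply: tangent_at_polar; rewrite ?(mulmx_singer_exp_eq0 S_singer) //.
- by move/prop_pt_sym; apply: fixfree.
- exact: (bundle_polar L_dim3 S_singer c_bundle (singer_exp_unitmx S_singer k)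
    delta_vertex_singer_exp cB c_preimage_B).
- apply/eqP => cBG; apply: (fixfree B B_neq0); apply: B_unique.
    by split; rewrite ?(mulmx_singer_exp_eq0 S_singer).
  by split; rewrite ?(mulmx_singer_exp_eq0 S_singer) // c'_img cB mulr0.
Qed.

Lemma singer_preimage_tangent : tangent_at c' B B (B *m invmx G).
Proof.
have [[B_neq0 cB] [_ c'B]] := (B_on_c, B_on_c'); have [kap _ c'_img] := c'_image.
have fixfree := singer_exp_fixfree S_singer c'_image c_neq_c'.
have G_unit := singer_exp_unitmx S_singer k.
apply: tangent_at_polar; rewrite ?(mulmx_singer_exp_inv_eq0 S_singer) //.
- case=> t t_neq0 EB; apply: (fixfree B B_neq0).
  by exists t => //; rewrite {1}EB -scalemxAl mulmxKV.
- rewrite -{1}(mulmxKV G_unit B) -{2}(mulmxKV G_unit (B *m invmx G)) (bil_image c'_img).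
  have GV_unit : invmx G \in unitmx by rewrite unitmx_inv.
  rewrite (bundle_polar L_dim3 S_singer c_bundle GV_unit delta_vertex_singer_exp_inv
    c_preimage_B) ?mulr0 //.
  by rewrite invmxK mulmxKV.
- apply/eqP => c'BGV; apply: (fixfree B B_neq0); apply: (prop_pt_invmx G_unit).
  by apply: B_unique; split; rewrite ?(mulmx_singer_exp_inv_eq0 S_singer).
Qed.

End SingerImage.

Theorem lemma3p8 (F : finFieldType) (L : fieldExtType F)
  (hL : \dim {: L} = 3%N) (S : 'M[F]_3) (hS : is_singer S)
  (c c' : 'rV[F]_6) (hc : in_bundle L S c) (hc' : in_bundle L S c')
  (hcc' : ~ same_conic c c') (k : nat) (hg : image_conic c c' (S ^+ k))
  (B : 'rV[F]_3) (hB : on_conic c B /\ on_conic c' B)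
  (hBu : forall X, on_conic c X -> on_conic c' X -> prop_pt X B)
  (A : 'rV[F]_3) (hA : on_conic c A) (hAB : prop_pt (A *m S ^+ k) B) :
  (forall P : 'rV[F]_3, on_conic c P -> ~ prop_pt P A -> ~ prop_pt P B ->
     on_line B P (P *m S ^+ k))
  /\ tangent_at c B B (B *m S ^+ k)
  /\ tangent_at c' B B (B *m invmx (S ^+ k)).
Proof.
have [B_on_c B_on_c'] := hB.
have c_preimage_B : qform c (B *m invmx (S ^+ k)) = 0.
  have [t t_neq0 EA] := hAB.
  rewrite (_ : B = t^-1 *: (A *m S ^+ k)); last by rewrite EA scalerA mulVf ?scale1r.
  by rewrite -scalemxAl mulmxK ?singer_exp_unitmx // qformZ hA.2 mulr0.
(* P = A and P = B need not be excluded: then B lies on P P^g trivially. *)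
split; first by move=> P P_on_c _ _; apply: (singer_image_collinear hL hS hc hcc' hg).
split; first exact: (singer_image_tangent hL hS hc hcc' hg B_on_c B_on_c').
exact: (singer_preimage_tangent hL hS hc hcc' hg B_on_c B_on_c').
Qed.
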